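(* Let $\mathcal{M}$ be a Ptolemy Möbius structure on a set $X$. Then there exists a bounded metric $d\in\mathcal{M}$, i.e. $d\in\mathcal{M}$ with $\Omega(d)=\emptyset$ and $\sup_{x,y\in X}d(x,y)<\infty$.
   Context: An extended metric on a set $X$ (with at least two points) is a map $d:X\times X\to[0,\infty]$ such that for some subset $\Omega(d)\subset X$ with at most one element, $d$ is a finite metric on $X\setminus\Omega(d)$, $d(x,\omega)=\infty$ for $x\notin\Omega(d)$, $\omega\in\Omega(d)$, and $d(\omega,\omega)=0$ ($\omega$ is written $\infty$). A quadruple is admissible if no entry occurs three or four times. $\mathrm{crt}(x,y,z,w)=(d(x,y)d(z,w):d(x,z)d(y,w):d(x,w)d(y,z))\in\mathbb{R}P^2$, with $\mathrm{crt}(x,y,z,\infty)=(d(x,y):d(x,z):d(y,z))$ and $\mathrm{crt}(x,y,\infty,\infty)=(0:1:1)$ (analogously for other positions). Extended metrics are Möbius equivalent if they have the same $\mathrm{crt}$ on all admissible quadruples; a Möbius structure is a nonempty, maximal set of pairwise Möbius equivalent extended metrics on $X$. A Möbius structure is Ptolemy if its metrics satisfy $d(x,y)d(z,w)\le d(x,z)d(y,w)+d(x,w)d(y,z)$ for all quadruples (equivalently the entries of every $\mathrm{crt}$ satisfy the triangle inequality). *)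

From Stdlib Require Import Reals.
Open Scope R_scope.

(* A value in [0, oo]: [Some r] is the finite value r, [None] is oo. *)
Definition ext := option R.

Section MoebiusDefs.
Variable X : Type.

Definition ext_metric (d : X -> X -> ext) : Prop :=
  exists Omega : X -> Prop,
    (forall a b, Omega a -> Omega b -> a = b) /\
    (forall x y, ~ Omega x -> ~ Omega y ->
       exists r, d x y = Some r /\ 0 <= r) /\
    (forall x y r, ~ Omega x -> ~ Omega y -> d x y = Some r -> (r = 0 <-> x = y)) /\
    (forall x y, ~ Omega x -> ~ Omega y -> d x y = d y x) /\
    (forall x y z rxy ryz rxz, ~ Omega x -> ~ Omega y -> ~ Omega z ->
       d x y = Some rxy -> d y z = Some ryz -> d x z = Some rxz ->
       rxz <= rxy + ryz) /\
    (forall x w, ~ Omega x -> Omega w -> d x w = None /\ d w x = None) /\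
    (forall w, Omega w -> d w w = Some 0).

(* Bookkeeping for products of extended distances: a product is r * oo^k. *)
Definition inf_ord (v : ext) : nat := match v with None => 1%nat | Some _ => 0%nat end.
Definition fin_part (v : ext) : R := match v with None => 1 | Some r => r end.

(* Normalized representative of the projective triple obtained from the three
   products a,b,c by dividing by the highest power of oo occurring. *)
Definition normalize3 (ka kb kc : nat) (a b c : R) : R * R * R :=
  let K := Nat.max ka (Nat.max kb kc) in
  ((if Nat.eqb ka K then a else 0),
   (if Nat.eqb kb K then b else 0),
   (if Nat.eqb kc K then c else 0)).

(* crt(x,y,z,w) = (d(x,y)d(z,w) : d(x,z)d(y,w) : d(x,w)d(y,z)), with the
   conventions for oo (these reproduce crt(x,y,z,oo) = (d(x,y):d(x,z):d(y,z))
   and crt(x,y,oo,oo) = (0:1:1), etc.). *)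
Definition crt_rep (d : X -> X -> ext) (x y z w : X) : R * R * R :=
  normalize3
    (inf_ord (d x y) + inf_ord (d z w))
    (inf_ord (d x z) + inf_ord (d y w))
    (inf_ord (d x w) + inf_ord (d y z))
    (fin_part (d x y) * fin_part (d z w))
    (fin_part (d x z) * fin_part (d y w))
    (fin_part (d x w) * fin_part (d y z)).

Definition proj_eq (p q : R * R * R) : Prop :=
  match p, q with
  | (a, b, c), (a', b', c') => exists l, l <> 0 /\ a' = l * a /\ b' = l * b /\ c' = l * c
  end.

Definition admissible (x y z w : X) : Prop :=
  ~ (x = y /\ y = z) /\ ~ (x = y /\ y = w) /\ ~ (x = z /\ z = w) /\ ~ (y = z /\ z = w).

Definition moebius_equiv (d1 d2 : X -> X -> ext) : Prop :=
  forall x y z w, admissible x y z w -> proj_eq (crt_rep d1 x y z w) (crt_rep d2 x y z w).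

Definition moebius_structure (M : (X -> X -> ext) -> Prop) : Prop :=
  (exists d, M d) /\
  (forall d, M d -> ext_metric d) /\
  (forall d1 d2, M d1 -> M d2 -> moebius_equiv d1 d2) /\
  (forall d, ext_metric d -> (forall d', M d' -> moebius_equiv d d') -> M d).

Definition ptolemy_metric (d : X -> X -> ext) : Prop :=
  forall x y z w, admissible x y z w ->
    match crt_rep d x y z w with
    | (a, b, c) => a <= b + c /\ b <= a + c /\ c <= a + b
    end.

Definition ptolemy_structure (M : (X -> X -> ext) -> Prop) : Prop :=
  moebius_structure M /\ forall d, M d -> ptolemy_metric d.

End MoebiusDefs.

(* Fix a point o at finite distance and rescale conformally:
   d'(u,v) = d(u,v) / (w(u) w(v)) with w(u) = 1 + d(u,o), reading d(u,oo) as 1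
   and w(oo) as 1.  Such a rescaling multiplies all three entries of every
   cross-ratio triple by the same factor, so d' is Moebius equivalent to d, and
   the point at infinity becomes a point at finite distance.  Clearing
   denominators, the triangle inequality for d' at finite points reads
     d(x,z) (1 + d(y,o)) <= d(x,y) (1 + d(z,o)) + d(y,z) (1 + d(x,o)),
   the sum of a triangle inequality and a Ptolemy inequality.  Finally
   d'(u,o) <= 1 for all u, so d' is bounded by 2. *)

From Stdlib Require Import Reals Lra Classical.
Open Scope R_scope.

Lemma proj_eq_trans p q s : proj_eq p q -> proj_eq q s -> proj_eq p s.
Proof.
  destruct p as [[a b] c], q as [[a' b'] c'], s as [[a'' b''] c''].
  intros (l & Hl & -> & -> & ->) (m & Hm & -> & -> & ->).
  exists (m * l); repeat split; try ring.
  intros Hml; apply Rmult_integral in Hml; tauto.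
Qed.

Section BoundedRepresentative.

Variables (X : Type) (d : X -> X -> ext) (Om : X -> Prop).

Hypotheses
  (Om_unique : forall a b, Om a -> Om b -> a = b)
  (d_fin : forall x y, ~ Om x -> ~ Om y -> exists r, d x y = Some r /\ 0 <= r)
  (d_eq0 : forall x y r, ~ Om x -> ~ Om y -> d x y = Some r -> (r = 0 <-> x = y))
  (d_sym : forall x y, ~ Om x -> ~ Om y -> d x y = d y x)
  (d_tri : forall x y z rxy ryz rxz, ~ Om x -> ~ Om y -> ~ Om z ->
     d x y = Some rxy -> d y z = Some ryz -> d x z = Some rxz -> rxz <= rxy + ryz)
  (d_inf : forall x w, ~ Om x -> Om w -> d x w = None /\ d w x = None)
  (d_Om : forall w, Om w -> d w w = Some 0).

Local Notation D u v := (fin_part (d u v)).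

Lemma d_inf_inf u v : Om u -> Om v -> d u v = Some 0.
Proof. intros Hu Hv; rewrite (Om_unique u v Hu Hv); apply d_Om; exact Hv. Qed.

Ltac eval_d_inf :=
  repeat match goal with
  | Hu : Om ?u, Hv : Om ?v |- context [d ?u ?v] => rewrite (d_inf_inf u v Hu Hv)
  | Hu : ~ Om ?u, Hv : Om ?v |- context [d ?u ?v] => rewrite (proj1 (d_inf u v Hu Hv))
  | Hu : Om ?u, Hv : ~ Om ?v |- context [d ?u ?v] => rewrite (proj2 (d_inf v u Hv Hu))
  end.

Ltac eval_d :=
  eval_d_inf;
  repeat match goal with
  | Hu : ~ Om ?u, Hv : ~ Om ?v |- context [d ?u ?v] =>
      let r := fresh "r" in let Hr := fresh "Hr" in
      destruct (d_fin u v Hu Hv) as (r & -> & Hr)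
  end.

Ltac case_Om x Hx := destruct (classic (Om x)) as [Hx | Hx].

Lemma D_nonneg u v : 0 <= D u v.
Proof. case_Om u Hu; case_Om v Hv; eval_d; simpl; lra. Qed.

Lemma D_sym u v : D u v = D v u.
Proof.
  case_Om u Hu; case_Om v Hv; try (rewrite d_sym by assumption; reflexivity); eval_d; reflexivity.
Qed.

Lemma D_eq0 u v : D u v = 0 <-> u = v.
Proof.
  case_Om u Hu; case_Om v Hv.
  - eval_d; simpl; split; [intros _; apply Om_unique | reflexivity]; assumption.
  - eval_d; simpl; split; [lra | intros ->; contradiction].
  - eval_d; simpl; split; [lra | intros ->; contradiction].
  - destruct (d_fin u v) as (r & Hr & _); try assumption.
    rewrite Hr; apply (d_eq0 u v); assumption.
Qed.

Lemma D_refl u : D u u = 0.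
Proof. apply D_eq0; reflexivity. Qed.

(* Entries whose order of infinity is not maximal involve d(oo,oo) = 0, so
   discarding them in [normalize3] changes nothing. *)
Lemma crt_rep_fin x y z w :
  crt_rep X d x y z w = (D x y * D z w, D x z * D y w, D x w * D y z).
Proof.
  unfold crt_rep, normalize3.
  case_Om x Hx; case_Om y Hy; case_Om z Hz; case_Om w Hw; eval_d; simpl; repeat f_equal; ring.
Qed.

Lemma D_triangle x y z : ~ Om x -> ~ Om y -> ~ Om z -> D x z <= D x y + D y z.
Proof.
  intros Hx Hy Hz.
  destruct (d_fin x y) as (a & Ha & _), (d_fin y z) as (b & Hb & _),
    (d_fin x z) as (c & Hc & _); try assumption.
  rewrite Ha, Hb, Hc; exact (d_tri x y z a b c Hx Hy Hz Ha Hb Hc).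
Qed.

Hypothesis d_ptolemy : ptolemy_metric X d.

Lemma D_ptolemy x y z w : D x y * D z w <= D x z * D y w + D x w * D y z.
Proof.
  assert (Hnn : 0 <= D x z * D y w + D x w * D y z).
  { pose proof (D_nonneg x z); pose proof (D_nonneg y w).
    pose proof (D_nonneg x w); pose proof (D_nonneg y z).
    apply Rplus_le_le_0_compat; apply Rmult_le_pos; assumption. }
  destruct (classic (admissible X x y z w)) as [Hadm | Hadm].
  - pose proof (d_ptolemy x y z w Hadm) as Hp; rewrite crt_rep_fin in Hp; tauto.
  - (* three coinciding points force a factor d(u,u) on the left *)
    unfold admissible in Hadm.
    destruct (classic (x = y)) as [<- | Hxy]; [rewrite D_refl; lra |].
    destruct (classic (z = w)) as [<- | Hzw]; [rewrite D_refl; lra |].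
    exfalso; apply Hadm; repeat split; intros [? ?]; congruence.
Qed.

Variables (o : X) (o_fin : ~ Om o).

Definition weight u := match d u o with Some r => 1 + r | None => 1 end.

Lemma weight_fin u : ~ Om u -> weight u = 1 + D u o.
Proof. intros Hu; unfold weight; destruct (d_fin u o Hu o_fin) as (r & -> & _); reflexivity. Qed.

Lemma weight_inf u : Om u -> weight u = 1.
Proof. intros Hu; unfold weight; rewrite (proj2 (d_inf o u o_fin Hu)); reflexivity. Qed.

Ltac eval_weight :=
  repeat match goal with
  | Hu : Om ?u |- context [weight ?u] => rewrite (weight_inf u Hu)
  | Hu : ~ Om ?u |- context [weight ?u] => rewrite (weight_fin u Hu)
  end.

Lemma D_le_weight u : D u o <= weight u.
Proof. case_Om u Hu; eval_weight; eval_d_inf; simpl; lra. Qed.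

Lemma weight_ge1 u : 1 <= weight u.
Proof. pose proof (D_nonneg u o); case_Om u Hu; eval_weight; lra. Qed.

(* Choosing weight 1 rather than 2 = 1 + d(oo,o) at the point at infinity is
   what makes the case y = oo work. *)
Lemma weighted_triangle x y z :
  D x z * weight y <= D x y * weight z + D y z * weight x.
Proof.
  case_Om x Hx; case_Om y Hy; case_Om z Hz; eval_weight; eval_d_inf; simpl fin_part.
  - lra.
  - lra.
  - lra.
  - pose proof (D_triangle y z o Hy Hz o_fin); lra.
  - lra.
  - pose proof (D_triangle x o z Hx o_fin Hz) as Ht; rewrite (D_sym o z) in Ht.
    pose proof (D_nonneg x z); lra.
  - pose proof (D_triangle y x o Hy Hx o_fin) as Ht; rewrite (D_sym y x) in Ht; lra.
  - pose proof (D_triangle x y z Hx Hy Hz).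
    pose proof (D_ptolemy x z y o) as Hp; rewrite (D_sym z y) in Hp; lra.
Qed.

Definition dist_bnd u v := D u v / (weight u * weight v).

Lemma dist_bnd_triangle x y z : dist_bnd x z <= dist_bnd x y + dist_bnd y z.
Proof.
  unfold dist_bnd.
  pose proof (weight_ge1 x); pose proof (weight_ge1 y); pose proof (weight_ge1 z).
  pose proof (weighted_triangle x y z).
  apply Rmult_le_reg_r with (weight x * weight y * weight z);
    [repeat apply Rmult_lt_0_compat; lra |].
  replace ((D x y / (weight x * weight y) + D y z / (weight y * weight z))
            * (weight x * weight y * weight z))
    with (D x y * weight z + D y z * weight x) by (field; lra).
  replace (D x z / (weight x * weight z) * (weight x * weight y * weight z))
    with (D x z * weight y) by (field; lra).
  assumption.
Qed.

Lemma dist_bnd_ext_metric : ext_metric X (fun u v => Some (dist_bnd u v)).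
Proof.
  assert (Hw : forall u v, 0 < weight u * weight v).
  { intros u v; pose proof (weight_ge1 u); pose proof (weight_ge1 v).
    apply Rmult_lt_0_compat; lra. }
  exists (fun _ => False); unfold dist_bnd.
  split; [intros a b [] |].
  split.
  { intros x y _ _; eexists; split; [reflexivity |].
    apply Rmult_le_pos; [apply D_nonneg | apply Rlt_le, Rinv_0_lt_compat, Hw]. }
  split.
  { intros x y r _ _ [= <-]; rewrite <- D_eq0.
    pose proof (weight_ge1 x); pose proof (weight_ge1 y).
    split; intros Hr.
    - replace (D x y) with (D x y / (weight x * weight y) * (weight x * weight y))
        by (field; split; lra).
      rewrite Hr; ring.
    - rewrite Hr; unfold Rdiv; ring. }
  split; [intros x y _ _; rewrite D_sym, Rmult_comm; reflexivity |].
  split; [intros x y z rxy ryz rxz _ _ _ [= <-] [= <-] [= <-]; apply dist_bnd_triangle |].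
  split; intros; contradiction.
Qed.

Lemma dist_bnd_moebius_equiv : moebius_equiv X (fun u v => Some (dist_bnd u v)) d.
Proof.
  intros x y z w _; rewrite crt_rep_fin; cbn; unfold dist_bnd.
  pose proof (weight_ge1 x); pose proof (weight_ge1 y).
  pose proof (weight_ge1 z); pose proof (weight_ge1 w).
  exists (weight x * weight y * weight z * weight w).
  repeat split; [apply Rgt_not_eq; repeat apply Rmult_lt_0_compat; lra
               | field; repeat split; lra ..].
Qed.

Lemma dist_bnd_le2 u v : dist_bnd u v <= 2.
Proof.
  assert (Ho : forall x, dist_bnd x o <= 1).
  { intros x; unfold dist_bnd; rewrite (weight_fin o o_fin), D_refl, Rplus_0_r, Rmult_1_r.
    pose proof (D_le_weight x); pose proof (weight_ge1 x).
    apply Rmult_le_reg_r with (weight x); [lra |].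
    field_simplify; lra. }
  pose proof (dist_bnd_triangle u o v); pose proof (Ho u); pose proof (Ho v).
  unfold dist_bnd in *; rewrite (D_sym o v), (Rmult_comm (weight o)) in *; lra.
Qed.

End BoundedRepresentative.

Theorem lemma2p3 (X : Type) (two_pts : exists a b : X, a <> b)
  (M : (X -> X -> ext) -> Prop) (HM : ptolemy_structure X M) :
  exists d : X -> X -> ext,
    M d /\
    (* Omega(d) is empty: all distances are finite *)
    (forall x y : X, exists r : R, d x y = Some r) /\
    (* bounded *)
    (exists B : R, forall (x y : X) (r : R), d x y = Some r -> r <= B).
Proof.
  destruct HM as [[[d Md] [M_ext [M_equiv M_max]]] M_ptolemy].
  pose proof (M_ptolemy d Md) as Hptol.
  destruct (M_ext d Md) as (Om & Hu & Hfin & Heq0 & Hsym & Htri & Hinf & HOm).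
  assert (exists o, ~ Om o) as [o Ho].
  { destruct two_pts as (a & b & Hab).
    destruct (classic (Om a)) as [Ha | Ha]; [| now exists a].
    exists b; intros Hb; exact (Hab (Hu a b Ha Hb)). }
  exists (fun u v => Some (dist_bnd X d o u v)); repeat split.
  - apply M_max; [eapply dist_bnd_ext_metric; eassumption |].
    intros d' Md' x y z w Hadm.
    apply proj_eq_trans with (crt_rep X d x y z w).
    + eapply dist_bnd_moebius_equiv; eassumption.
    + exact (M_equiv d d' Md Md' x y z w Hadm).
  - intros x y; eauto.
  - exists 2; intros x y r [= <-]; eapply dist_bnd_le2; eassumption.
Qed.
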